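(* Let $J : \mathfrak{n} \rightarrow \mathfrak{n}$ be any linear map. $J$ has zero torsion if and only if it is equivalent to one of the endomorphisms defined in the basis $(x_1,x_2,x_3)$ by: (i) $S(\xi^3_3)=\begin{pmatrix} 0&-1&0\\ 1&0&0\\ 0&0&\xi^3_3 \end{pmatrix}$, $\xi^3_3 \in \mathbb{R}$; (ii) $D(\xi^1_1)=\begin{pmatrix} \xi^1_1&0&0\\ 0&\xi^1_1&0\\ 0&0&\frac{(\xi^1_1)^2-1}{2\xi^1_1} \end{pmatrix}$, $\xi^1_1 \in \mathbb{R}$, $\xi^1_1 \neq 0$; (iii) $T(a,b)=\begin{pmatrix} 0&-ab&0\\ 1&b&0\\ 0&0&\frac{ab-1}{b} \end{pmatrix}$, $a,b \in \mathbb{R}$, $b \neq 0$. Any two distinct endomorphisms in the preceding list are non equivalent. $T(a,b)$ is equivalent to $T'(a,b)=\begin{pmatrix} b&-b&0\\ a&0&0\\ 0&0&\frac{ab-1}{b} \end{pmatrix}$.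
   Context: $\mathfrak{n}$ is the real 3-dimensional Heisenberg Lie algebra with basis $(x_1,x_2,x_3)$ and commutation relations $[x_1,x_2]=x_3$. A linear map $J:\mathfrak{g}\to\mathfrak{g}$ on a real Lie algebra has zero torsion if $[JX,JY]-[X,Y]-J[JX,Y]-J[X,JY]=0$ for all $X,Y\in\mathfrak{g}$. Two such maps $J,J'$ are equivalent if $J'=\Phi\circ J\circ\Phi^{-1}$ for some $\Phi\in\mathrm{Aut}\,\mathfrak{g}$. *)

From HB Require Import structures.
From mathcomp Require Import all_boot all_order all_algebra.
From mathcomp Require Import reals.
Set Implicit Arguments. Unset Strict Implicit. Unset Printing Implicit Defensive.
Import Order.TTheory GRing.Theory Num.Theory.
Local Open Scope ring_scope.

Section Heis.
Variable R : realType.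

(* Vectors of the Heisenberg algebra n = R^3 in coordinates w.r.t. (x1,x2,x3),
   as column vectors; x_{i+1} is the i-th standard basis vector. *)
Definition hvec := 'cV[R]_3.

(* Lie bracket: [x1,x2] = x3, all other brackets of basis vectors zero
   (besides antisymmetry). [X,Y] = (X1 Y2 - X2 Y1) x3. *)
Definition hbr (X Y : hvec) : hvec :=
  (X 0 0 * Y 1 0 - X 1 0 * Y 0 0) *: delta_mx 2 0.

(* A linear map J : n -> n is represented by its matrix in the basis
   (x1,x2,x3), acting by J *m X (column j = image of x_{j+1}). *)
Definition zero_torsion (J : 'M[R]_3) : Prop :=
  forall X Y : hvec,
    hbr (J *m X) (J *m Y) - hbr X Y - J *m hbr (J *m X) Y - J *m hbr X (J *m Y) = 0.

Definition is_aut (P : 'M[R]_3) : Prop :=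
  P \in unitmx /\ forall X Y : hvec, P *m hbr X Y = hbr (P *m X) (P *m Y).

Definition equivJ (J J' : 'M[R]_3) : Prop :=
  exists P, is_aut P /\ J' = P *m J *m invmx P.

Definition mx3 (a b c d e f g h k : R) : 'M[R]_3 :=
  \matrix_(i < 3, j < 3)
    nth 0 (nth [::] [:: [:: a; b; c]; [:: d; e; f]; [:: g; h; k]] i) j.

Definition Smx (xi33 : R) := mx3 0 (-1) 0 1 0 0 0 0 xi33.
Definition Dmx (xi11 : R) :=
  mx3 xi11 0 0 0 xi11 0 0 0 ((xi11 ^+ 2 - 1) / (2 * xi11)).
Definition Tmx (a b : R) := mx3 0 (- (a * b)) 0 1 b 0 0 0 ((a * b - 1) / b).
Definition T'mx (a b : R) := mx3 b (- b) 0 a 0 0 0 0 ((a * b - 1) / b).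

Definition in_list (J : 'M[R]_3) : Prop :=
  (exists xi33 : R, J = Smx xi33)
  \/ (exists xi11 : R, xi11 != 0 /\ J = Dmx xi11)
  \/ (exists a b : R, b != 0 /\ J = Tmx a b).

End Heis.

From HB Require Import structures.
From mathcomp Require Import all_boot all_order all_algebra.
From mathcomp Require Import reals.
From mathcomp Require Import ring lra.
Set Implicit Arguments. Unset Strict Implicit. Unset Printing Implicit Defensive.
Import Order.TTheory GRing.Theory Num.Theory.
Local Open Scope ring_scope.

(* Zero torsion forces J x3 to lie in R x3, so J has block form [[A, 0], [w, k]],
   and the remaining condition is det A - 1 = k tr A.  Automorphisms of n are the
   matrices [[Q, 0], [w', det Q]] with Q invertible.  Conjugating by them one clears w
   (k is not an eigenvalue of A, as det (A - k) = 1 + k^2) and replaces A by a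
   similar 2x2 matrix: a scalar A gives D, otherwise A has a cyclic vector and
   becomes a companion matrix, which is S when tr A = 0 and T otherwise.  Since
   k, tr A, det A and whether A is scalar are invariants, the list is irredundant. *)

Section Heisenberg.
Variable R : realType.
Implicit Types (J K L P Q : 'M[R]_3) (X Y : 'cV[R]_3) (a b c d e f g h k p q r s u v x y z : R).

Definition cv3 (x y z : R) : 'cV[R]_3 := \col_(i < 3) nth 0 [:: x; y; z] i.

Ltac ord3 i := case: i => [[|[|[|?]]] ?] //.

Lemma mx3_eta J :
  J = mx3 (J 0 0) (J 0 1) (J 0 2) (J 1 0) (J 1 1) (J 1 2) (J 2 0) (J 2 1) (J 2 2).
Proof.
by apply/matrixP => i j; rewrite !mxE; ord3 i; ord3 j; congr (J _ _); apply: val_inj.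
Qed.

Lemma cv3_eta X : X = cv3 (X 0 0) (X 1 0) (X 2 0).
Proof.
by apply/matrixP => i j; rewrite !mxE; ord3 i; ord3 j; congr (X _ _); apply: val_inj.
Qed.

Lemma cv3_inj x y z x' y' z' :
  cv3 x y z = cv3 x' y' z' -> [/\ x = x', y = y' & z = z'].
Proof.
move=> E; have C i := congr1 (fun M : 'cV_3 => M i 0) E.
by move: (C 0) (C 1) (C 2); rewrite !mxE.
Qed.

Lemma mx3_inj a b c d e f g h k a' b' c' d' e' f' g' h' k' :
  mx3 a b c d e f g h k = mx3 a' b' c' d' e' f' g' h' k' ->
  [/\ [/\ a = a', b = b' & c = c'], [/\ d = d', e = e' & f = f']
    & [/\ g = g', h = h' & k = k']].
Proof.
move=> E; have C i j := congr1 (fun M : 'M_3 => M i j) E.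
by move: (C 0 0) (C 0 1) (C 0 2) (C 1 0) (C 1 1) (C 1 2) (C 2 0) (C 2 1) (C 2 2);
  rewrite !mxE.
Qed.

Lemma cv30 : 0 = cv3 0 0 0.
Proof. by apply/matrixP => i j; rewrite !mxE; ord3 i. Qed.

Lemma mx31 : (1%:M : 'M[R]_3) = mx3 1 0 0 0 1 0 0 0 1.
Proof. by apply/matrixP => i j; rewrite !mxE; ord3 i; ord3 j. Qed.

Lemma cv3B x y z x' y' z' : cv3 x y z - cv3 x' y' z' = cv3 (x - x') (y - y') (z - z').
Proof. by apply/matrixP => i j; rewrite !mxE; ord3 i. Qed.

Lemma mul_mx3 a b c d e f g h k a' b' c' d' e' f' g' h' k' :
  mx3 a b c d e f g h k *m mx3 a' b' c' d' e' f' g' h' k' =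
  mx3 (a*a' + b*d' + c*g') (a*b' + b*e' + c*h') (a*c' + b*f' + c*k')
      (d*a' + e*d' + f*g') (d*b' + e*e' + f*h') (d*c' + e*f' + f*k')
      (g*a' + h*d' + k*g') (g*b' + h*e' + k*h') (g*c' + h*f' + k*k').
Proof.
apply/matrixP => i j; rewrite !mxE !big_ord_recr big_ord0 /= !mxE /= add0r.
by ord3 i; ord3 j.
Qed.

Lemma mul_mx3_cv3 a b c d e f g h k x y z :
  mx3 a b c d e f g h k *m cv3 x y z =
  cv3 (a*x + b*y + c*z) (d*x + e*y + f*z) (g*x + h*y + k*z).
Proof.
apply/matrixP => i j; rewrite !mxE !big_ord_recr big_ord0 /= !mxE /= add0r.
by ord3 i; ord3 j.
Qed.

Lemma hbr_cv3 x y z x' y' z' : hbr (cv3 x y z) (cv3 x' y' z') = cv3 0 0 (x*y' - y*x').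
Proof.
by apply/matrixP => i j; rewrite !mxE; ord3 i; ord3 j => /=; rewrite ?mulr0 ?mulr1.
Qed.

Lemma is_aut1 : is_aut (1%:M : 'M[R]_3).
Proof. by split; [exact: unitmx1 | move=> X Y; rewrite !mul1mx]. Qed.

Lemma is_autM P Q : is_aut P -> is_aut Q -> is_aut (P *m Q).
Proof.
move=> [Pu HP] [Qu HQ]; split; first by rewrite unitmx_mul Pu Qu.
by move=> X Y; rewrite -mulmxA HQ HP !mulmxA.
Qed.

Lemma is_autV P : is_aut P -> is_aut (invmx P).
Proof.
move=> [Pu HP]; split; first by rewrite unitmx_inv.
by move=> X Y; rewrite -{1}(mulKVmx Pu X) -{1}(mulKVmx Pu Y) -HP mulKmx.
Qed.

Lemma equivJP J K : equivJ J K <-> exists2 P, is_aut P & K *m P = P *m J.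
Proof.
split=> [[P [aP ->]] | [P aP E]]; case: (aP) => Pu _.
  by exists P => //; rewrite mulmxKV.
by exists P; split=> //; rewrite -E mulmxK.
Qed.

Lemma intertwine_equivJ P J K : is_aut P -> K *m P = P *m J -> equivJ J K.
Proof. by move=> aP E; apply/equivJP; exists P. Qed.

Lemma equivJ_refl J : equivJ J J.
Proof. by apply/equivJP; exists 1%:M; [exact: is_aut1 | rewrite mulmx1 mul1mx]. Qed.

Lemma equivJ_sym J K : equivJ J K -> equivJ K J.
Proof.
move=> [P [aP ->]]; exists (invmx P); split; first exact: is_autV.
by case: aP => Pu _; rewrite invmxK !mulmxA (mulVmx Pu) mul1mx mulmxKV.
Qed.

Lemma equivJ_trans J K L : equivJ J K -> equivJ K L -> equivJ J L.
Proof.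
move=> /equivJP[P aP EP] /equivJP[Q aQ EQ]; apply/equivJP.
by exists (Q *m P); [exact: is_autM | rewrite mulmxA EQ -!mulmxA EP].
Qed.

Definition torsion J X Y :=
  hbr (J *m X) (J *m Y) - hbr X Y - J *m hbr (J *m X) Y - J *m hbr X (J *m Y).

Lemma torsion_conj P J X Y : is_aut P ->
  torsion (P *m J *m invmx P) (P *m X) (P *m Y) = P *m torsion J X Y.
Proof.
move=> [Pu HP].
have conjP Z : P *m J *m invmx P *m (P *m Z) = P *m (J *m Z).
  by rewrite -!mulmxA mulKmx.
by rewrite /torsion !conjP -!HP !conjP !mulmxBr !mulmxA.
Qed.

Lemma zero_torsion_equiv J K : equivJ J K -> zero_torsion K -> zero_torsion J.
Proof.
move=> [P [aP ->]] zK X Y; case: (aP) => Pu _.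
have := zK (P *m X) (P *m Y); rewrite -/(torsion _ _ _) torsion_conj // => E.
by rewrite -/(torsion _ _ _) -(mulKmx Pu (torsion J X Y)) E mulmx0.
Qed.

Lemma torsion_mx3 a b c d e f g h k x1 x2 x3 y1 y2 y3 :
  let JX1 := a*x1 + b*x2 + c*x3 in let JX2 := d*x1 + e*x2 + f*x3 in
  let JY1 := a*y1 + b*y2 + c*y3 in let JY2 := d*y1 + e*y2 + f*y3 in
  let u := JX1*y2 - JX2*y1 + x1*JY2 - x2*JY1 in
  torsion (mx3 a b c d e f g h k) (cv3 x1 x2 x3) (cv3 y1 y2 y3) =
  cv3 (- c * u) (- f * u) (JX1*JY2 - JX2*JY1 - (x1*y2 - x2*y1) - k * u).
Proof. by rewrite /torsion !mul_mx3_cv3 !hbr_cv3 !mul_mx3_cv3 !cv3B; congr cv3; ring. Qed.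

Lemma zero_torsion_mx3 a b c d e f g h k :
  zero_torsion (mx3 a b c d e f g h k) <->
  [/\ c = 0, f = 0 & a*e - b*d - 1 = (a + e) * k].
Proof.
split=> [zt | [-> -> rel] X Y].
  have basis x1 x2 x3 y1 y2 y3 :
      torsion (mx3 a b c d e f g h k) (cv3 x1 x2 x3) (cv3 y1 y2 y3) = cv3 0 0 0.
    by rewrite -cv30; apply: zt.
  move: (basis 1 0 0 0 0 1) (basis 0 1 0 0 0 1) (basis 1 0 0 0 1 0).
  rewrite !torsion_mx3 => /cv3_inj[_ ff _] /cv3_inj[cc _ _] /cv3_inj[_ _ rel].
  have f0 : f = 0 by nra.
  have c0 : c = 0 by nra.
  by split=> //; move: rel; rewrite c0 f0; lra.
rewrite -/(torsion _ _ _) (cv3_eta X) (cv3_eta Y) torsion_mx3 cv30 /=.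
congr cv3; [ring | ring |].
transitivity ((a*e - b*d - 1 - (a + e) * k) * (X 0 0 * Y 1 0 - X 1 0 * Y 0 0)); first ring.
by rewrite rel subrr mul0r.
Qed.

Lemma is_aut_mx3 p q r s u v : p*s - q*r != 0 ->
  is_aut (mx3 p q 0 r s 0 u v (p*s - q*r)).
Proof.
move=> dt0; split; last first.
  by move=> X Y; rewrite (cv3_eta X) (cv3_eta Y) hbr_cv3 !mul_mx3_cv3 hbr_cv3; congr cv3; ring.
set dt := p*s - q*r in dt0 *.
suff /mulmx1_unit[] : mx3 (s/dt) (- q/dt) 0 (- r/dt) (p/dt) 0
    ((v*r - u*s)/dt^+2) ((u*q - v * p)/dt^+2) (1/dt) *m mx3 p q 0 r s 0 u v dt = 1%:M.
  by [].
by rewrite mul_mx3 mx31 /dt; congr mx3; field.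
Qed.

Lemma is_aut_shape P : is_aut P ->
  exists p q r s u v, p*s - q*r != 0 /\ P = mx3 p q 0 r s 0 u v (p*s - q*r).
Proof.
move=> [Pu HP]; move: (HP (cv3 1 0 0) (cv3 0 1 0)).
rewrite {1 2 3}(mx3_eta P) hbr_cv3 !mul_mx3_cv3 hbr_cv3 => /cv3_inj[].
rewrite !(mulr0, mulr1, mul1r, mul0r, addr0, add0r, subr0) => P02 P12 P22.
exists (P 0 0), (P 0 1), (P 1 0), (P 1 1), (P 2 0), (P 2 1); split; last first.
  by rewrite {1}(mx3_eta P) P02 P12 P22; congr mx3; ring.
apply/eqP => dt0; have : P *m cv3 0 0 1 = 0.
  by rewrite {1}(mx3_eta P) mul_mx3_cv3 cv30 P02 P12 P22; congr cv3; lra.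
by move/(congr1 (mulmx (invmx P))); rewrite mulKmx // mulmx0 cv30 => /cv3_inj[_ _ /eqP];
  rewrite oner_eq0.
Qed.

(* The relation forces (a - k)(e - k) - b d = 1 + k^2, so k is not an eigenvalue
   of the block and the bottom row can be conjugated away. *)
Lemma equivJ_clear_bottom_row a b d e g h k : a*e - b*d - 1 = (a + e) * k ->
  equivJ (mx3 a b 0 d e 0 g h k) (mx3 a b 0 d e 0 0 0 k).
Proof.
move=> rel; set n := (a - k) * (e - k) - b*d.
have n0 : n != 0.
  have -> : n = 1 + k ^+ 2 by rewrite /n; lra.
  by rewrite lt0r_neq0 // ltr_pwDl ?sqr_ge0.
have dt0 : 1 * 1 - 0 * 0 != 0 :> R by rewrite mulr1 mulr0 subr0 oner_eq0.
apply: (intertwine_equivJ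
  (is_aut_mx3 ((h*d - g*(e - k)) / n) ((g*b - h*(a - k)) / n) dt0)).
by rewrite !mul_mx3; congr mx3; rewrite /n; field.
Qed.

(* A non-scalar block has a cyclic vector v (x1 if d != 0, x2 if b != 0, x1 + x2
   otherwise), and in the basis (v, J v) it becomes a companion matrix. *)
Lemma equivJ_companion a b d e k : ~ [/\ b = 0, d = 0 & a = e] ->
  equivJ (mx3 a b 0 d e 0 0 0 k) (mx3 0 (- (a*e - b*d)) 0 1 (a + e) 0 0 0 k).
Proof.
move=> nscalar; apply: equivJ_sym.
have [d0 | /negPf d0] := eqVneq d 0; last first.
  have dt0 : 1 * d - a * 0 != 0 by rewrite mul1r mulr0 subr0 d0.
  by apply: (intertwine_equivJ (is_aut_mx3 0 0 dt0)); rewrite !mul_mx3; congr mx3; ring.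
have [b0 | /negPf b0] := eqVneq b 0; last first.
  have dt0 : 0 * e - b * 1 != 0 by rewrite mul0r sub0r mulr1 oppr_eq0 b0.
  by apply: (intertwine_equivJ (is_aut_mx3 0 0 dt0)); rewrite !mul_mx3 d0; congr mx3; ring.
have dt0 : 1 * e - a * 1 != 0.
  by rewrite mul1r mulr1 subr_eq0; apply/eqP => ea; apply: nscalar.
by apply: (intertwine_equivJ (is_aut_mx3 0 0 dt0)); rewrite !mul_mx3 b0 d0; congr mx3; ring.
Qed.

Lemma companion_in_list a b d e k : a*e - b*d - 1 = (a + e) * k ->
  in_list (mx3 0 (- (a*e - b*d)) 0 1 (a + e) 0 0 0 k).
Proof.
move=> rel; have [tr0 | tr0] := eqVneq (a + e) 0.
  have dt1 : a*e - b*d = 1 by move: rel; rewrite tr0 mul0r => /eqP; rewrite subr_eq0 => /eqP.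
  by left; exists k; rewrite /Smx dt1 tr0.
right; right; exists ((a*e - b*d) / (a + e)), (a + e); split => //.
by rewrite /Tmx divfK // rel [_ * k]mulrC mulfK.
Qed.

Lemma scalar_block_Dmx a k : a * a - 1 = (a + a) * k ->
  a != 0 /\ mx3 a 0 0 0 a 0 0 0 k = Dmx a.
Proof.
move=> rel; have a0 : a != 0 by apply/eqP => a0; move: rel; rewrite a0; lra.
have a2 : 2 * a != 0 by rewrite mulf_neq0 // pnatr_eq0.
by split=> //; rewrite /Dmx; congr mx3; apply: (mulIf a2); rewrite divfK //; lra.
Qed.

Lemma block_equiv_in_list a b d e k : a*e - b*d - 1 = (a + e) * k ->
  exists J0, in_list J0 /\ equivJ (mx3 a b 0 d e 0 0 0 k) J0.
Proof.
move=> rel; case: (boolP [&& b == 0, d == 0 & a == e]).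
  move=> /and3P[/eqP b0 /eqP d0 /eqP ea]; rewrite b0 d0 -ea in rel *.
  have [a0 ->] : a != 0 /\ mx3 a 0 0 0 a 0 0 0 k = Dmx a.
    by apply: scalar_block_Dmx; lra.
  by exists (Dmx a); split; [right; left; exists a | exact: equivJ_refl].
move=> nscalar; exists (mx3 0 (- (a*e - b*d)) 0 1 (a + e) 0 0 0 k).
split; first exact: companion_in_list.
by apply: equivJ_companion => -[b0 d0 ea]; move: nscalar; rewrite b0 d0 ea !eqxx.
Qed.

Lemma in_list_zero_torsion J : in_list J -> zero_torsion J.
Proof.
by case=> [[x ->] | [[x [x0 ->]] | [a [b [b0 ->]]]]]; apply/zero_torsion_mx3; split=> //;
  field.
Qed.

Lemma zero_torsion_classification J :
  zero_torsion J <-> exists J0, in_list J0 /\ equivJ J J0.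
Proof.
split=> [| [J0 [/in_list_zero_torsion zJ0 /zero_torsion_equiv]]]; last exact.
rewrite (mx3_eta J) => /zero_torsion_mx3[-> -> rel].
have [J0 [J0_list equivJ0]] := block_equiv_in_list rel.
by exists J0; split=> //; apply: equivJ_trans equivJ0; apply: equivJ_clear_bottom_row.
Qed.

Lemma equivJ_block m11 m12 m21 m22 j n11 n12 n21 n22 k :
  equivJ (mx3 m11 m12 0 m21 m22 0 0 0 j) (mx3 n11 n12 0 n21 n22 0 0 0 k) ->
  exists p q r s, [/\ p*s - q*r != 0, k = j,
    n11 * p + n12 * r = p * m11 + q * m21 /\ n11 * q + n12 * s = p * m12 + q * m22
    & n21 * p + n22 * r = r * m11 + s * m21 /\ n21 * q + n22 * s = r * m12 + s * m22].
Proof.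
move=> /equivJP[P aP]; have [p [q [r [s [u [v [dt0 ->]]]]]]] := is_aut_shape aP.
rewrite !mul_mx3 => /mx3_inj[[e11 e12 _] [e21 e22 _] [_ _ e33]].
by exists p, q, r, s; split=> //; [apply: (mulIf dt0) | split | split]; lra.
Qed.

Lemma equivJ_block_invariants m11 m12 m21 m22 j n11 n12 n21 n22 k :
  equivJ (mx3 m11 m12 0 m21 m22 0 0 0 j) (mx3 n11 n12 0 n21 n22 0 0 0 k) ->
  [/\ k = j, n11 + n22 = m11 + m22 & n11 * n22 - n12 * n21 = m11 * m22 - m12 * m21].
Proof.
move=> /equivJ_block[p [q [r [s [dt0 kj [e11 e12] [e21 e22]]]]]].
split=> //; apply: (mulIf dt0).
  have -> : (n11 + n22) * (p*s - q*r) = s * (n11 * p + n12 * r) - q * (n21 * p + n22 * r)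
      - r * (n11 * q + n12 * s) + p * (n21 * q + n22 * s) by ring.
  by rewrite e11 e12 e21 e22; ring.
have -> : (n11 * n22 - n12 * n21) * (p*s - q*r) =
    (n11 * p + n12 * r) * (n21 * q + n22 * s) - (n11 * q + n12 * s) * (n21 * p + n22 * r).
  by ring.
by rewrite e11 e12 e21 e22; ring.
Qed.

Lemma equivJ_scalar_block x j n11 n12 n21 n22 k :
  equivJ (mx3 x 0 0 0 x 0 0 0 j) (mx3 n11 n12 0 n21 n22 0 0 0 k) ->
  [/\ n11 = x, n12 = 0, n21 = 0 & n22 = x].
Proof.
move=> /equivJ_block[p [q [r [s [dt0 _ [e11 e12] [e21 e22]]]]]].
split; apply: (mulIf dt0).
- have -> : n11 * (p*s - q*r) = s * (n11 * p + n12 * r) - r * (n11 * q + n12 * s) by ring.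
  by rewrite e11 e12; ring.
- have -> : n12 * (p*s - q*r) = p * (n11 * q + n12 * s) - q * (n11 * p + n12 * r) by ring.
  by rewrite e11 e12; ring.
- have -> : n21 * (p*s - q*r) = s * (n21 * p + n22 * r) - r * (n21 * q + n22 * s) by ring.
  by rewrite e21 e22; ring.
- have -> : n22 * (p*s - q*r) = p * (n21 * q + n22 * s) - q * (n21 * p + n22 * r) by ring.
  by rewrite e21 e22; ring.
Qed.

Lemma Tmx_equiv_T'mx a b : b != 0 -> equivJ (Tmx a b) (T'mx a b).
Proof.
move=> b0; have dt0 : 0 * 0 - (- b) * 1 != 0 by rewrite mul0r sub0r mulr1 opprK.
by apply: (intertwine_equivJ (is_aut_mx3 0 0 dt0)); rewrite !mul_mx3; congr mx3; ring.
Qed.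

Lemma in_list_inequivalent J1 J2 :
  in_list J1 -> in_list J2 -> J1 <> J2 -> ~ equivJ J1 J2.
Proof.
case=> [[x ->] | [[x [x0 ->]] | [a [b [b0 ->]]]]];
case=> [[y ->] | [[y [y0 ->]] | [a' [b' [b0' ->]]]]];
rewrite /Smx /Dmx /Tmx => neq E;
have [kj tr dt] := equivJ_block_invariants E.
- by apply: neq; rewrite kj.
- by apply/(negP y0)/eqP; lra.
- by apply/(negP b0')/eqP; lra.
- by apply/(negP x0)/eqP; lra.
- by apply: neq; have -> : y = x by lra.
- by case: (equivJ_scalar_block E) => _ _ /eqP; rewrite oner_eq0.
- by apply/(negP b0)/eqP; lra.
- by case: (equivJ_scalar_block (equivJ_sym E)) => _ _ /eqP; rewrite oner_eq0.
- have bb : b' = b by lra.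
  have aa : a' = a by apply: (mulIf b0); rewrite -{1}bb; lra.
  by apply: neq; rewrite aa bb.
Qed.

End Heisenberg.

Theorem lemma3 (R : realType) :
  (forall J : 'M[R]_3,
      zero_torsion J <-> exists J0, in_list J0 /\ equivJ J J0)
  /\ (forall J1 J2 : 'M[R]_3,
        in_list J1 -> in_list J2 -> J1 <> J2 -> ~ equivJ J1 J2)
  /\ (forall a b : R, b != 0 -> equivJ (Tmx a b) (T'mx a b)).
Proof.
split; first exact: zero_torsion_classification.
by split; [exact: in_list_inequivalent | exact: Tmx_equiv_T'mx].
Qed.
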